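(* Let $\mathbb{K}$ be any field and $n$ a positive integer. Let $S$ be a linear subspace of $\mathrm{A}_n(\mathbb{K})$ such that $\dim S>3$ and every matrix of $S$ has rank at most $2$. Then $S$ is congruent to a subspace of $\mathrm{WA}_{n,1,1}(\mathbb{K})$.
   Context: $\mathrm{A}_n(\mathbb{K})$ is the space of $n\times n$ alternating matrices (skew-symmetric, zero diagonal). Subsets $\mathcal{V},\mathcal{W}$ of $\mathrm{M}_n(\mathbb{K})$ are congruent if $\mathcal{V}=P\mathcal{W}P^T$ for some $P\in\mathrm{GL}_n(\mathbb{K})$. $\mathrm{WA}_{n,1,1}(\mathbb{K})$ is the space of all $M=(m_{i,j})\in\mathrm{A}_n(\mathbb{K})$ with $m_{i,j}=0$ whenever $i>1$ and $j>1$ and $\max(i,j)>2$; equivalently the alternating matrices whose nonzero entries lie in the first row, the first column, or at positions $(1,2),(2,1)$ — i.e. all entries outside the first row and column vanish. *)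

From HB Require Import structures.
From mathcomp Require Import all_boot all_order all_algebra.
Set Implicit Arguments. Unset Strict Implicit. Unset Printing Implicit Defensive.
Import GRing.Theory.
Local Open Scope ring_scope.

(* Indices are 0-based: the paper's (i,j) is our (i-1, j-1). *)

Definition alternating (K : fieldType) (n : nat) (M : 'M[K]_n) : Prop :=
  M^T = - M /\ forall i : 'I_n, M i i = 0.

(* WA_{n,1,1}(K): alternating M with m_{i,j} = 0 whenever i>1, j>1 and
   max(i,j)>2 (1-based), i.e. (0-based) i>0, j>0, max(i,j)>1. *)
Definition in_WA11 (K : fieldType) (n : nat) (M : 'M[K]_n) : Prop :=
  alternating M /\
  forall i j : 'I_n, (0 < i)%N -> (0 < j)%N -> (1 < maxn i j)%N -> M i j = 0.

(* A nonzero alternating matrix of rank at most 2 has rank exactly 2 and equals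
   c (v0 ∧ v1), where v0, v1 span its row space.  If the row planes of two such
   matrices M, N of S met trivially, c^-1 M + d^-1 N would compress, under
   X^T (.) X for a right inverse X of the stacked bases, to the standard
   symplectic form of rank 4; hence any two row planes of S meet.  Let
   M1, M2 in S be independent: their row planes meet in a line K w.  An element
   of S whose row plane contains w vanishes on w^⊥ × w^⊥, and any other element
   has its row plane inside the 3-space M1 + M2.  If some N in S did not vanish
   on w^⊥ × w^⊥, applying this dichotomy to N + L would put every L in S inside
   that 3-space, whose alternating forms make up a space of dimension 3.  So all
   of S vanishes on w^⊥ × w^⊥, and any basis whose last n - 1 vectors span w^⊥
   brings S into WA_{n,1,1}. *)

From mathcomp Require Import all_boot all_order all_algebra.
From mathcomp Require Import ring zify.
From Stdlib Require Import Classical.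
Import GRing.Theory.
Local Open Scope ring_scope.
Set Implicit Arguments. Unset Strict Implicit. Unset Printing Implicit Defensive.

Definition wedge (K : fieldType) (n : nat) (a b : 'rV[K]_n) : 'M[K]_n :=
  a^T *m b - b^T *m a.

Lemma rank_le1_submx (K : fieldType) (m p n : nat)
    (A : 'M[K]_(m, n)) (B : 'M[K]_(p, n)) :
  (A <= B)%MS -> (\rank B <= 1)%N -> A != 0 -> (B <= A)%MS.
Proof.
move=> sAB rB A0; rewrite -(mxrank_leqif_sup sAB).2 eqn_leq mxrankS //=.
by rewrite (leq_trans rB) // lt0n mxrank_eq0.
Qed.

Section AlternatingForms.

Variable K : fieldType.

Lemma trmx11 (A : 'M[K]_1) : A^T = A.
Proof. by rewrite [A]mx11_scalar tr_scalar_mx. Qed.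

Lemma mulmx11E (A B : 'M[K]_1) : (A *m B) 0 0 = A 0 0 * B 0 0.
Proof. by rewrite mxE big_ord1. Qed.

Lemma mulmx_trC (n : nat) (u v : 'rV[K]_n) : (u *m v^T) 0 0 = (v *m u^T) 0 0.
Proof. by rewrite -[u *m v^T]trmx11 trmx_mul trmxK. Qed.

Lemma alternating_opp_entry (r : nat) (W : 'M[K]_r) i j :
  alternating W -> W j i = - W i j.
Proof. by case=> /matrixP/(_ i j) + _; rewrite !mxE. Qed.

Lemma alternating_form0 (n : nat) (M : 'M[K]_n) (x : 'rV[K]_n) :
  alternating M -> x *m M *m x^T = 0.
Proof.
case=> Mt Md.
pose U : 'M[K]_n := \matrix_(k, l) (if (k < l)%N then M k l else 0).
have -> : M = U - U^T.
  apply/matrixP=> k l; rewrite !mxE.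
  case: ltngtP => [_|_|/val_inj->]; first by rewrite subr0.
    by move/matrixP/(_ l k): Mt; rewrite !mxE sub0r => ->.
  by rewrite Md subrr.
rewrite mulmxBr mulmxBl -[x *m U^T *m x^T]trmx11.
by rewrite !trmx_mul !trmxK mulmxA subrr.
Qed.

Lemma mulmx3_entry (m n p q : nat) (A : 'M[K]_(m, n)) (B : 'M[K]_(n, p))
    (C : 'M[K]_(p, q)) i j :
  (A *m B *m C) i j = (row i A *m B *m col j C) 0 0.
Proof.
have -> : row i A *m B *m col j C = col j (row i (A *m B *m C)).
  by rewrite !colE !row_mul !mulmxA.
by rewrite !mxE.
Qed.

Lemma alternating_congr (n r : nat) (M : 'M[K]_n) (X : 'M[K]_(n, r)) :
  alternating M -> alternating (X^T *m M *m X).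
Proof.
move=> aM; split; first by rewrite !trmx_mul trmxK aM.1 mulNmx mulmxN mulmxA.
by move=> i; rewrite mulmx3_entry -[col i X]trmxK tr_col alternating_form0 // mxE.
Qed.

Lemma wedge_congr (m n : nat) (X : 'M[K]_(m, n)) (a b : 'rV[K]_m) :
  X^T *m wedge a b *m X = wedge (a *m X) (b *m X).
Proof. by rewrite /wedge mulmxBr mulmxBl !trmx_mul !mulmxA. Qed.

Lemma alternating_mx1 (W : 'M[K]_1) : alternating W -> W = 0.
Proof. by case=> _ Wd; apply/matrixP=> i j; rewrite !ord1 Wd mxE. Qed.

Lemma ord2_cases (i : 'I_2) : i = 0 \/ i = 1.
Proof. by case: i => [[|[|//]] ?]; [left|right]; apply: val_inj. Qed.

Lemma ord3_cases (i : 'I_3) : [\/ i = 0, i = 1 | i = 2].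
Proof.
by case: i => [[|[|[|//]]] ?]; [constructor 1|constructor 2|constructor 3]; apply: val_inj.
Qed.

Lemma alternating_mx2 (W : 'M[K]_2) :
  alternating W -> W = W 0 1 *: wedge (delta_mx 0 0) (delta_mx 0 1).
Proof.
move=> aW; apply/matrixP=> i j; rewrite !mxE !big_ord1 !mxE.
have W10 := alternating_opp_entry 0 1 aW; have Wd := aW.2.
by case: (ord2_cases i) (ord2_cases j) => -> [] ->; rewrite /= ?Wd ?W10; ring.
Qed.

Lemma alternating_mx3 (W : 'M[K]_3) : alternating W ->
  W = W 0 1 *: wedge (delta_mx 0 0) (delta_mx 0 1)
    + W 0 2 *: wedge (delta_mx 0 0) (delta_mx 0 2)
    + W 1 2 *: wedge (delta_mx 0 1) (delta_mx 0 2).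
Proof.
move=> aW; apply/matrixP=> i j; rewrite !mxE !big_ord1 !mxE.
have W10 := alternating_opp_entry 0 1 aW; have W20 := alternating_opp_entry 0 2 aW.
have W21 := alternating_opp_entry 1 2 aW; have Wd := aW.2.
by case: (ord3_cases i) (ord3_cases j) => -> [] ->; rewrite /= ?Wd ?W10 ?W20 ?W21; ring.
Qed.

Lemma alternating_factor (n r : nat) (V : 'M[K]_(r, n)) (M : 'M[K]_n) :
  row_free V -> (M <= V)%MS -> alternating M ->
  exists2 W : 'M[K]_r, alternating W & M = V^T *m W *m V.
Proof.
move=> /row_freeP[X VX] /submxP[Z defM] aM.
exists (X^T *m M *m X); first exact: alternating_congr.
have defZ : Z = M *m X by rewrite defM -mulmxA VX mulmx1.
have MtE : M^T = V^T *m X^T *m M^T by rewrite {1}defM trmx_mul defZ trmx_mul mulmxA.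
have {}MtE : M = V^T *m X^T *m M.
  by apply: oppr_inj; rewrite -mulmxN -aM.1.
by rewrite !mulmxA -MtE -defZ -defM.
Qed.

Lemma congr_alternating_mx2 (n : nat) (V : 'M[K]_(2, n)) (W : 'M[K]_2) :
  alternating W -> V^T *m W *m V = W 0 1 *: wedge (row 0 V) (row 1 V).
Proof.
by move=> /alternating_mx2 {1}->; rewrite -scalemxAr -scalemxAl wedge_congr -!rowE.
Qed.

Lemma congr_alternating_mx3 (n : nat) (V : 'M[K]_(3, n)) (W : 'M[K]_3) :
  alternating W -> V^T *m W *m V =
    W 0 1 *: wedge (row 0 V) (row 1 V) + W 0 2 *: wedge (row 0 V) (row 2 V)
    + W 1 2 *: wedge (row 1 V) (row 2 V).
Proof.
move=> /alternating_mx3 {1}->.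
by rewrite !mulmxDr !mulmxDl -!scalemxAr -!scalemxAl !wedge_congr -!rowE.
Qed.

Lemma row_base_rank (m n r : nat) (A : 'M[K]_(m, n)) :
  \rank A = r -> exists2 V : 'M[K]_(r, n), row_free V & (V :=: A)%MS.
Proof. by move=> <-; exists (row_base A); [exact: row_base_free | exact: eq_row_base]. Qed.

Lemma alternating_rank_neq1 (n : nat) (M : 'M[K]_n) :
  alternating M -> \rank M != 1.
Proof.
move=> aM; apply/eqP => rM; have [V freeV defV] := row_base_rank rM.
have sMV : (M <= V)%MS by rewrite defV.
have [W /alternating_mx1 W0 defM] := alternating_factor freeV sMV aM.
by move: rM; rewrite defM W0 mulmx0 mul0mx mxrank0.
Qed.

Lemma alternating_rank2 (n : nat) (M : 'M[K]_n) :
  alternating M -> \rank M = 2 ->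
  exists2 V : 'M[K]_(2, n), (V :=: M)%MS &
    exists2 c : K, c != 0 & M = c *: wedge (row 0 V) (row 1 V).
Proof.
move=> aM rM; have [V freeV defV] := row_base_rank rM.
have sMV : (M <= V)%MS by rewrite defV.
have [W aW defM] := alternating_factor freeV sMV aM.
exists V => //; exists (W 0 1); last by rewrite defM congr_alternating_mx2.
apply: contra_eqN rM => /eqP W01.
by rewrite defM congr_alternating_mx2 // W01 scale0r mxrank0.
Qed.

Lemma alternating_sub_rank2 (n : nat) (M N : 'M[K]_n) :
  alternating M -> alternating N -> \rank M = 2 -> (N <= M)%MS ->
  N \in <[M]>%VS.
Proof.
move=> aM aN rM sNM; have [V defV [c c0 defM]] := alternating_rank2 aM rM.
have freeV : row_free V by rewrite /row_free defV rM.
have sNV : (N <= V)%MS by rewrite defV.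
have [W aW ->] := alternating_factor freeV sNV aN.
apply/vlineP; exists (W 0 1 / c).
by rewrite congr_alternating_mx2 // defM scalerA divfK.
Qed.

Definition symplectic4 : 'M[K]_(2 + 2) :=
  wedge (delta_mx 0 (lshift 2 0)) (delta_mx 0 (lshift 2 1))
  + wedge (delta_mx 0 (rshift 2 0)) (delta_mx 0 (rshift 2 1)).

Lemma symplectic4_sqr : symplectic4 *m symplectic4 = - 1%:M.
Proof.
apply/matrixP=> i j; rewrite !mxE !big_ord_recl big_ord0 !mxE.
rewrite !big_ord_recl !big_ord0 !mxE.
case: i => [[|[|[|[|//]]]] ?]; case: j => [[|[|[|[|//]]]] ?] /=.
all: rewrite ?mulr1n ?mulr0n; ring.
Qed.

Lemma mxrank_symplectic4 : \rank symplectic4 = 4%N.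
Proof.
apply/eqP; rewrite eqn_leq rank_leq_row /=.
have := mxrankM_maxl symplectic4 symplectic4.
by rewrite symplectic4_sqr (eqmx_opp 1%:M) mxrank1.
Qed.

Lemma mxrank_adds_rank2_pencil (n : nat) (M N : 'M[K]_n) :
  alternating M -> alternating N -> \rank M = 2 -> \rank N = 2 ->
  (forall a b : K, \rank (a *: M + b *: N)%R <= 2)%N ->
  (\rank (M + N)%MS <= 3)%N.
Proof.
move=> aM aN rM rN pencil; rewrite leqNgt; apply/negP => rMN.
have [U defU [c c0 defM]] := alternating_rank2 aM rM.
have [V defV [d d0 defN]] := alternating_rank2 aN rN.
have /row_freeP[X UVX] : row_free (col_mx U V).
  by rewrite /row_free eqn_leq rank_leq_row -addsmxE (adds_eqmx defU defV).
have rowX i : row i (col_mx U V) *m X = delta_mx 0 i by rewrite -row_mul UVX row1.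
have := pencil c^-1 d^-1; rewrite defM defN !scalerA !mulVf // !scale1r.
move=> rL; pose L := wedge (row 0 U) (row 1 U) + wedge (row 0 V) (row 1 V).
have LX : X^T *m L *m X = symplectic4.
  rewrite mulmxDr mulmxDl !wedge_congr.
  by rewrite -(rowKu _ U V) -(rowKu _ U V) -(rowKd _ U V) -(rowKd _ U V) !rowX.
have := mxrankM_maxl (X^T *m L) X; rewrite LX mxrank_symplectic4.
by move/leq_trans/(_ (leq_trans (mxrankM_maxr _ _) rL)).
Qed.

Lemma cross2_eq0 (a b p0 p1 q0 q1 : K) :
  (a != 0) || (b != 0) -> a * p0 + b * p1 = 0 -> a * q0 + b * q1 = 0 ->
  p0 * q1 - p1 * q0 = 0.
Proof.
move=> /orP[] nz hp hq; apply: (mulfI nz); rewrite mulr0.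
  have -> : a * (p0 * q1 - p1 * q0) = (a * p0 + b * p1) * q1 - p1 * (a * q0 + b * q1)
    by ring.
  by rewrite hp hq mul0r mulr0 subr0.
have -> : b * (p0 * q1 - p1 * q0) = p0 * (a * q0 + b * q1) - (a * p0 + b * p1) * q0
  by ring.
by rewrite hp hq mul0r mulr0 subr0.
Qed.

Lemma wedge_formE (n : nat) (a b x y : 'rV[K]_n) :
  (x *m wedge a b *m y^T) 0 0
    = (x *m a^T) 0 0 * (y *m b^T) 0 0 - (x *m b^T) 0 0 * (y *m a^T) 0 0.
Proof.
rewrite /wedge mulmxBr mulmxBl !mulmxA -(mulmxA (x *m a^T)) -(mulmxA (x *m b^T)).
by rewrite mxE [X in _ + X]mxE !mulmx11E (mulmx_trC b) (mulmx_trC a).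
Qed.

Definition isotropic_perp (n : nat) (w : 'rV[K]_n) (M : 'M[K]_n) :=
  forall x y : 'rV[K]_n, x *m w^T = 0 -> y *m w^T = 0 -> x *m M *m y^T = 0.

Lemma isotropic_perp_rank2 (n : nat) (M : 'M[K]_n) (w : 'rV[K]_n) :
  alternating M -> \rank M = 2 -> w != 0 -> (w <= M)%MS -> isotropic_perp w M.
Proof.
move=> aM rM w0 wM x y xw yw.
have [V defV [c _ ->]] := alternating_rank2 aM rM.
have /submxP[D defw] : (w <= V)%MS by rewrite defV.
have {}defw : w = D 0 0 *: row 0 V + D 0 1 *: row 1 V.
  rewrite defw mulmx_sum_row big_ord_recl big_ord1.
  by rewrite (_ : lift ord0 ord0 = 1) //; apply: val_inj.
have D0 : (D 0 0 != 0) || (D 0 1 != 0).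
  apply: contraNT w0; rewrite negb_or !negbK defw => /andP[/eqP-> /eqP->].
  by rewrite !scale0r addr0.
have orth (z : 'rV_n) : z *m w^T = 0 ->
    D 0 0 * (z *m (row 0 V)^T) 0 0 + D 0 1 * (z *m (row 1 V)^T) 0 0 = 0.
  by move/matrixP/(_ 0 0); rewrite defw linearD !linearZ /= mulmxDr -!scalemxAr !mxE.
apply/matrixP=> i j; rewrite !ord1 -scalemxAr -scalemxAl mxE wedge_formE.
by rewrite (cross2_eq0 D0 (orth x xw) (orth y yw)) mulr0 mxE.
Qed.

Lemma perp_rows_unitmx (n : nat) (w : 'rV[K]_n) : w != 0 ->
  exists2 P : 'M[K]_n, P \in unitmx &
    forall i : 'I_n, (0 < i)%N -> row i P *m w^T = 0.
Proof.
move=> w0; exists (invmx (row_ebase w))^T.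
  by rewrite unitmx_tr unitmx_inv row_ebase_unit.
move=> i i0; rewrite -row_mul -trmx_mul.
have -> : w *m invmx (row_ebase w) = col_ebase w *m pid_mx (\rank w).
  by rewrite -{1}(mulmx_ebase w) mulmxK // row_ebase_unit.
apply/matrixP=> a b; rewrite !ord1 !mxE big1 // => k _.
rewrite !mxE rank_rV w0; case: eqP => [->|]; last by rewrite andFb mulr0.
by rewrite ltnNge i0 andbF mulr0.
Qed.

Lemma in_WA11_isotropic_perp (n : nat) (w : 'rV[K]_n) (P M : 'M[K]_n) :
  (forall i : 'I_n, (0 < i)%N -> row i P *m w^T = 0) ->
  alternating M -> isotropic_perp w M -> in_WA11 (P *m M *m P^T).
Proof.
move=> Pw aM isoM; split; first by have := alternating_congr P^T aM; rewrite trmxK.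
by move=> i j i0 j0 _; rewrite mulmx3_entry -tr_row isoM ?Pw ?mxE.
Qed.

Lemma dimv_alternating_rank3 (m n : nat) (S : {vspace 'M[K]_n}) (U : 'M[K]_(m, n)) :
  (forall M, M \in S -> alternating M) -> (forall M, M \in S -> (M <= U)%MS) ->
  \rank U = 3 -> (\dim S <= 3)%N.
Proof.
move=> S_alt SU /row_base_rank[V freeV defV].
pose wedges := [:: wedge (row 0 V) (row 1 V); wedge (row 0 V) (row 2 V);
                   wedge (row 1 V) (row 2 V)].
apply: leq_trans (dim_span wedges); apply/dimvS/subvP => M MS.
have sMV : (M <= V)%MS by rewrite defV SU.
have [W aW ->] := alternating_factor freeV sMV (S_alt M MS).
by rewrite congr_alternating_mx3 // !memvD // memvZ // memv_span // !inE eqxx ?orbT.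
Qed.

End AlternatingForms.

Section RankTwoAlternatingSpace.

Variables (K : fieldType) (n : nat) (S : {vspace 'M[K]_n}).
Hypothesis S_alt : forall M, M \in S -> alternating M.
Hypothesis S_rank : forall M, M \in S -> (\rank M <= 2)%N.

Lemma rank_eq2 M : M \in S -> M != 0 -> \rank M = 2%N.
Proof.
move=> MS M0; have := S_rank MS; have := alternating_rank_neq1 (S_alt MS).
by rewrite -mxrank_eq0 in M0; case: (\rank M) M0 => [|[|[|]]].
Qed.

Lemma rank_adds_le3 M N : M \in S -> N \in S -> M != 0 -> N != 0 ->
  (\rank (M + N)%MS <= 3)%N.
Proof.
move=> MS NS M0 N0.
apply: mxrank_adds_rank2_pencil; try by [apply: S_alt | apply: rank_eq2].
by move=> a b; apply: S_rank; rewrite memvD ?memvZ.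
Qed.

Lemma rank_cap_gt0 M N : M \in S -> N \in S -> M != 0 -> N != 0 ->
  (0 < \rank (M :&: N)%MS)%N.
Proof.
move=> MS NS M0 N0; have := mxrank_sum_cap M N.
rewrite (rank_eq2 MS M0) (rank_eq2 NS N0); have := rank_adds_le3 MS NS M0 N0; lia.
Qed.

Lemma rank_cap_eq1 M N : M \in S -> N \in S -> M != 0 -> N \notin <[M]>%VS ->
  \rank (M :&: N)%MS = 1%N.
Proof.
move=> MS NS M0 NM; have N0 : N != 0 by apply: contraNneq NM => ->; rewrite mem0v.
apply/eqP; rewrite eqn_leq rank_cap_gt0 // andbT leqNgt; apply: contra NM => rC.
have sNC : (N <= M :&: N)%MS.
  by rewrite -(mxrank_leqif_sup (capmxSr M N)).2 eqn_leq mxrankS ?capmxSr // rank_eq2.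
apply: alternating_sub_rank2; try by [apply: S_alt | apply: rank_eq2].
exact: submx_trans sNC (capmxSl M N).
Qed.

Variables M1 M2 : 'M[K]_n.
Hypotheses (M1S : M1 \in S) (M2S : M2 \in S) (M1_neq0 : M1 != 0).
Hypothesis M2_notin : M2 \notin <[M1]>%VS.

Let w := nz_row (M1 :&: M2)%MS.

Lemma M2_neq0 : M2 != 0.
Proof. by apply: contraNneq M2_notin => ->; rewrite mem0v. Qed.

Lemma nz_row_cap_neq0 : w != 0.
Proof. by rewrite nz_row_eq0 -mxrank_eq0 rank_cap_eq1. Qed.

Lemma isotropic_perp_or_sub N : N \in S ->
  isotropic_perp w N \/ (N <= M1 + M2)%MS.
Proof.
move=> NS; have [->|N0] := eqVneq N 0; first by right; rewrite sub0mx.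
have [wN|wN] := boolP (w <= N)%MS.
  left; apply: isotropic_perp_rank2 wN; first exact: S_alt.
    exact: rank_eq2.
  exact: nz_row_cap_neq0.
right; set l1 := (N :&: M1)%MS; set l2 := (N :&: M2)%MS.
have l12_0 : (l1 :&: l2)%MS = 0.
  apply/eqP; rewrite -mxrank_eq0 -leqn0 leqNgt; apply: contra wN => l12_gt0.
  have sCl12 : (M1 :&: M2 <= l1 :&: l2)%MS.
    by rewrite rank_le1_submx ?capmxS ?capmxSr ?rank_cap_eq1 // -mxrank_eq0 -lt0n.
  apply: submx_trans (nz_row_sub _) (submx_trans sCl12 _).
  exact: submx_trans (capmxSl _ _) (capmxSl _ _).
have rl12 : (2 <= \rank (l1 + l2)%MS)%N.
  rewrite mxrank_disjoint_sum //.
  exact: leq_add (rank_cap_gt0 NS M1S N0 M1_neq0) (rank_cap_gt0 NS M2S N0 M2_neq0).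
have sNl12 : (N <= l1 + l2)%MS.
  rewrite -(mxrank_leqif_sup (_ : l1 + l2 <= N)%MS).2; last by rewrite addsmx_sub !capmxSl.
  by rewrite eqn_leq mxrankS ?addsmx_sub ?capmxSl //= (rank_eq2 NS N0).
by apply: submx_trans sNl12 _; rewrite addsmxS ?capmxSr.
Qed.

Lemma rank_adds_eq3 : \rank (M1 + M2)%MS = 3%N.
Proof.
have := mxrank_sum_cap M1 M2.
rewrite (rank_cap_eq1 M1S M2S M1_neq0 M2_notin).
by rewrite (rank_eq2 M1S M1_neq0) (rank_eq2 M2S M2_neq0); lia.
Qed.

Hypothesis S_dim : (3 < \dim S)%N.

Lemma isotropic_perp_all N : N \in S -> isotropic_perp w N.
Proof.
move=> NS; apply: NNPP => notN.
have S_sub L : L \in S -> (L <= M1 + M2)%MS.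
  move=> LS; have [isoL|//] := isotropic_perp_or_sub LS.
  have sN : (N <= M1 + M2)%MS by case: (isotropic_perp_or_sub NS).
  have [isoNL|sNL] := isotropic_perp_or_sub (memvD NS LS).
    case: notN => x y xw yw.
    by have := isoNL x y xw yw; rewrite mulmxDr mulmxDl isoL // addr0.
  by rewrite -(addKr N L) addmx_sub // (eqmx_opp N).
have := dimv_alternating_rank3 S_alt S_sub rank_adds_eq3.
by rewrite leqNgt S_dim.
Qed.

End RankTwoAlternatingSpace.

Theorem proposition1p5 (K : fieldType) (n : nat) (S : {vspace 'M[K]_n}) :
  (0 < n)%N ->
  (forall M, M \in S -> alternating M) ->
  (3 < \dim S)%N ->
  (forall M, M \in S -> (\rank M <= 2)%N) ->
  exists2 P : 'M[K]_n, P \in unitmx &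
    forall M, M \in S -> in_WA11 (P *m M *m P^T).
Proof.
(* [0 < n] follows from [3 < \dim S]. *)
move=> _ S_alt S_dim S_rank.
have S_neq0 : S != 0%VS by rewrite -dimv_eq0 -lt0n (ltn_trans _ S_dim).
pose M1 := vpick S; have M1S : M1 \in S := memv_pick S.
have M1_neq0 : M1 != 0 by rewrite vpick0.
have /subvPn[M2 M2S M2_notin] : ~~ (S <= <[M1]>)%VS.
  apply: contraTN S_dim => /dimvS sS; rewrite -leqNgt (leq_trans sS) // dim_vline.
  by case: (_ != 0).
have w_neq0 := nz_row_cap_neq0 S_alt S_rank M1S M2S M1_neq0 M2_notin.
have [P P_unit Pw] := perp_rows_unitmx w_neq0.
exists P => // M MS; apply: in_WA11_isotropic_perp Pw (S_alt M MS) _.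
exact: (isotropic_perp_all S_alt S_rank M1S M2S M1_neq0 M2_notin S_dim MS).
Qed.
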